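(* Let $(\Omega,\mathcal{F},P)=([0,1],\mathcal{B}([0,1]),\lambda)$ with $\lambda$ Lebesgue measure. Let $(\varepsilon_n)\subset(0,1)$ be a sequence with $\varepsilon_n\to0$ and, for each $n$, let $S^n_t=0$ for $t\in[0,1)$ and $S^n_1(\omega)=-\frac{1}{\sqrt{\omega}}$ for $\omega\in[0,\varepsilon_n)$, $S^n_1(\omega)=\frac{1}{(1-\omega)^{1/(n+1)}}$ for $\omega\in[\varepsilon_n,1]$, where $(\varepsilon_n)$ is chosen such that $E[S^n_1]=1$ for all $n$. Consider the filtration generated by $(S^n)_{n\in\mathbb{N}}$ (so that predictable strategies are deterministic and the terminal value of a portfolio in the first $n$ assets has the form $\sum_{k=1}^n c_kS^k_1$ with constants $c_k\in\mathbb{R}$). Then: (1) for $n\in\mathbb{N}$ and $c_1,\dots,c_n\in\mathbb{R}$ such that $X_1=\sum_{k=1}^nc_kS^k_1\ge-1$ a.s., one has $\sum_{k\in G_+}c_k\le\sum_{k\in G_-}|c_k|$, where $G_+=\{j:c_j>0\}$, $G_-=\{j:c_j<0\}$; (2) $P=\lambda$ is a separating measure for $\mathcal{X}$, i.e. $E_P[X_1]\le0$ for all $X\in\mathcal{X}$.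
   Context: For this market, $\mathcal{X}^n_1$ denotes the set of stochastic integrals $(\mathbf{H}\bullet\mathbf{S}^n)$, $\mathbf{S}^n=(S^1,\dots,S^n)$, with $\mathbf{H}$ $\mathbb{R}^n$-valued predictable $\mathbf{S}^n$-integrable and $(\mathbf{H}\bullet\mathbf{S}^n)_t\ge-1$ for all $t$; $\mathcal{X}_1$ is the closure of $\bigcup_{n\ge1}\mathcal{X}^n_1$ in the Emery topology (metric $d_{\mathbb{S}}(X,Y)=\sup_{K}E[\sup_{t\le1}|(K\bullet(X-Y))_t|\wedge1]$ over simple predictable $K$, $\|K\|_\infty\le1$), and $\mathcal{X}=\bigcup_{\lambda>0}\lambda\mathcal{X}_1$. *)

From mathcomp Require Import all_boot all_order all_algebra.
From mathcomp Require Import all_classical all_reals all_analysis.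
Import Order.TTheory GRing.Theory Num.Theory.
Import numFieldNormedType.Exports.
Local Open Scope classical_set_scope.
Local Open Scope ring_scope.

Set Implicit Arguments.
Unset Strict Implicit.
Unset Printing Implicit Defensive.

(* Omega = [0,1] with Lebesgue measure; random variables are functions R -> R
   considered on `[0,1]. *)

(* Terminal value S^n_1 of the n-th asset (n >= 1); S^n_t = 0 for t < 1. *)
Definition Sn (R : realType) (eps : nat -> R) (n : nat) (w : R) : R :=
  if w < eps n then - (Num.sqrt w)^-1
  else (powR (1 - w) (n.+1%:R)^-1)^-1.

Definition portfolio (R : realType) (eps : nat -> R) (n : nat) (c : nat -> R)
  (w : R) : R := \sum_(1 <= k < n.+1) c k * Sn eps k w.

Definition Xn1 (R : realType) (eps : nat -> R) (n : nat) : set (R -> R) :=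
  [set f | exists c : nat -> R, f = portfolio eps n c /\
     {ae (@lebesgue_measure R), forall w, `[0, 1]%classic w -> -1 <= f w}].

(* Emery distance between two processes that vanish on [0,1) and jump at 1:
   d(X,Y) = E[ |X_1 - Y_1| /\ 1 ]. *)
Definition emery_dist (R : realType) (f g : R -> R) : \bar R :=
  (\int[@lebesgue_measure R]_(w in `[0%R, 1%R]) (Num.min `|f w - g w| 1)%:E)%E.

(* X_1 : closure of \bigcup_{n>=1} X^n_1 in the Emery topology *)
Definition X1 (R : realType) (eps : nat -> R) : set (R -> R) :=
  [set X | measurable_fun (`[0%R, 1%R]%classic : set R) X /\
     exists u : nat -> (R -> R),
       (forall m, exists2 n, (0 < n)%N & Xn1 eps n (u m)) /\
       (fun m => emery_dist (u m) X) @ \oo --> 0%:E].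

Definition calX (R : realType) (eps : nat -> R) : set (R -> R) :=
  [set X | exists2 lam : R, 0 < lam &
     exists2 Y, X1 eps Y & X = (fun w => lam * Y w)].

From mathcomp Require Import all_boot all_order all_algebra.
From mathcomp Require Import all_classical all_reals all_analysis.
From mathcomp Require Import measurable_realfun lra.
Import Order.TTheory GRing.Theory Num.Theory.
Import numFieldNormedType.Exports.
Local Open Scope classical_set_scope.
Local Open Scope ring_scope.

Set Implicit Arguments.
Unset Strict Implicit.
Unset Printing Implicit Defensive.

(* Near 0 every S^k_1 equals -1/sqrt w, so a portfolio equals -(sum_k c_k)/sqrt w
   there; if sum_k c_k > 0 it drops below -1 on an interval of positive length.
   Hence admissible portfolios have sum_k c_k <= 0, which is (1), and E[X_1] =
   sum_k c_k <= 0 for X in X^n_1.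
   For (2), clip at -1 and K: g_K(x) = (x v -1) ^ K + 1 satisfies E[g_K(X_1)] <= 1
   on X^n_1, and g_K is (K+1)-Lipschitz for the truncated distance min(|x-y|, 1),
   so the bound survives Emery limits Y.  Since g_K(Y) = (Y^+ ^ K) + 1 - (Y^- ^ 1),
   this reads E[Y^+ ^ K] <= E[Y^- ^ 1] <= E[Y^-], and monotone convergence in K
   gives E[Y] <= 0; the capping of Y^- at 1 matters because Emery limits need
   not be bounded below. *)

Section clip.
Context {R : realFieldType}.

(* The shift by 1 makes [clip K] nonnegative, so only integrals of nonnegative
   functions occur. *)
Definition clip (K x : R) : R := Num.min (Num.max x (-1)) K + 1.

Ltac case_minmax := repeat match goal with
  | |- context [Num.max ?a ?b] => case: (leP a b) => ?
  | |- context [Num.min ?a ?b] => case: (leP a b) => ?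
  end.

Lemma clip_ge0 K x : 0 <= K -> 0 <= clip K x.
Proof. by move=> K0; rewrite /clip; case_minmax; lra. Qed.

Lemma clip_le K x : clip K x <= Num.max x (-1) + 1.
Proof. by rewrite /clip lerD2r ge_min lexx. Qed.

Lemma clip_lipschitz K x y : 0 <= K ->
  clip K y <= clip K x + (K + 1) * Num.min `|x - y| 1.
Proof.
move=> K0; rewrite /clip; have [xy|xy] := leP 0 (x - y).
  by rewrite ger0_norm //; case_minmax; nra.
by rewrite ltr0_norm //; case_minmax; nra.
Qed.

Lemma clip_split K y : 0 <= K ->
  clip K y = Num.min (Num.max y 0) K + (1 - Num.min (Num.max (- y) 0) 1).
Proof. by move=> K0; rewrite /clip; case_minmax; lra. Qed.

End clip.

Section unit_mass.
Context d (T : measurableType d) (R : realType) (mu : {measure set T -> \bar R}).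
Context (D : set T).
Hypotheses (mD : measurable D) (muD : mu D = 1%E).

Lemma integral_cst1 : (\int[mu]_(w in D) (1%:E : \bar R) = 1%:E)%E.
Proof. by rewrite integral_cst // muD mul1e. Qed.

Lemma measurable_clip (K : R) (f : T -> R) : measurable_fun D f ->
  measurable_fun D (fun w => clip K (f w)).
Proof.
move=> mf; apply: measurable_funD; last exact: measurable_cst.
apply: measurable_minr; last exact: measurable_cst.
by apply: measurable_maxr => //; exact: measurable_cst.
Qed.

Lemma measurable_dist1 (f g : T -> R) : measurable_fun D f -> measurable_fun D g ->
  measurable_fun D (fun w => Num.min `|f w - g w| 1).
Proof.
move=> mf mg; apply: measurable_minr; last exact: measurable_cst.
by apply: measurableT_comp => //; exact: measurable_funB.
Qed.

Lemma integral_clip_le1 (K : R) (u : T -> R) : 0 <= K ->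
  mu.-integrable D (EFin \o u) -> (\int[mu]_(w in D) (u w)%:E <= 0)%E ->
  {ae mu, forall w, D w -> -1 <= u w} ->
  (\int[mu]_(w in D) (clip K (u w))%:E <= 1%:E)%E.
Proof.
move=> K0 iu Iu0 hae.
have mu_ : measurable_fun D u by apply/measurable_EFinP; exact: measurable_int iu.
have mu1 : measurable_fun D (fun w => Num.max (u w) (-1) + 1)%R.
  apply: measurable_funD; last exact: measurable_cst.
  by apply: measurable_maxr => //; exact: measurable_cst.
have i1 : mu.-integrable D (EFin \o cst 1%R).
  apply/integrableP; split; first exact/measurable_EFinP/measurable_cst.
  by under eq_integral do rewrite /= normr1; rewrite integral_cst1 ltry.
apply: (@le_trans _ _ (\int[mu]_(w in D) (Num.max (u w) (-1) + 1)%:E)%E).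
  apply: ge0_le_integral => //.
  - by move=> w _; rewrite lee_fin clip_ge0.
  - exact/measurable_EFinP/measurable_clip.
  - exact/measurable_EFinP.
  - by move=> w _; rewrite lee_fin clip_le.
have -> : (\int[mu]_(w in D) (Num.max (u w) (-1) + 1)%:E =
          \int[mu]_(w in D) (u w + 1)%:E)%E.
  apply: ae_eq_integral => //.
  - exact/measurable_EFinP.
  - by apply/measurable_EFinP; apply: measurable_funD => //; exact: measurable_cst.
  - apply: filterS hae => w hw Dw; by rewrite max_l // hw.
rewrite (_ : (fun w => (u w + 1)%:E) = (EFin \o u) \+ (EFin \o cst 1%R)) //.
by rewrite integralD // integral_cst1 -[leRHS]add0e leeD2r.
Qed.

Lemma integral_clip_le_dist (K : R) (u Y : T -> R) : 0 <= K ->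
  measurable_fun D u -> measurable_fun D Y ->
  (\int[mu]_(w in D) (clip K (Y w))%:E <=
   \int[mu]_(w in D) (clip K (u w))%:E +
   (K + 1)%:E * \int[mu]_(w in D) (Num.min `|u w - Y w| 1)%:E)%E.
Proof.
move=> K0 mu_ mY.
have md : measurable_fun D (fun w => Num.min `|u w - Y w| 1).
  exact: measurable_dist1.
have md0 w : 0 <= Num.min `|u w - Y w| 1 by rewrite le_min normr_ge0 ler01.
rewrite -ge0_integralZl_EFin ?addr_ge0 //; last exact/measurable_EFinP.
rewrite -ge0_integralD //.
- apply: ge0_le_integral => //.
  + by move=> w _; rewrite lee_fin clip_ge0.
  + exact/measurable_EFinP/measurable_clip.
  + apply: emeasurable_funD; first exact/measurable_EFinP/measurable_clip.
    exact/measurable_funeM/measurable_EFinP.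
  + by move=> w _; rewrite -EFinM -EFinD lee_fin clip_lipschitz.
- by move=> w _; rewrite lee_fin clip_ge0.
- exact/measurable_EFinP/measurable_clip.
- by move=> w _; rewrite -EFinM lee_fin mulr_ge0 ?addr_ge0.
- exact/measurable_funeM/measurable_EFinP.
Qed.

Lemma integral_clip_le1_of_approx (K : R) (u : nat -> T -> R) (Y : T -> R) :
  0 <= K -> measurable_fun D Y ->
  (forall m, mu.-integrable D (EFin \o u m)) ->
  (forall m, (\int[mu]_(w in D) (u m w)%:E <= 0)%E) ->
  (forall m, {ae mu, forall w, D w -> -1 <= u m w}) ->
  (fun m => \int[mu]_(w in D) (Num.min `|u m w - Y w| 1)%:E)%E @ \oo --> 0%:E ->
  (\int[mu]_(w in D) (clip K (Y w))%:E <= 1%:E)%E.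
Proof.
move=> K0 mY iu Iu0 hae dist0.
have bound m : (\int[mu]_(w in D) (clip K (Y w))%:E <=
    1%:E + (K + 1)%:E * \int[mu]_(w in D) (Num.min `|u m w - Y w| 1)%:E)%E.
  have mu_ : measurable_fun D (u m).
    by apply/measurable_EFinP; exact: measurable_int (iu m).
  apply: le_trans (integral_clip_le_dist K0 mu_ mY) _.
  by rewrite leeD2r // integral_clip_le1.
have lim1 : ((fun m => 1%:E + (K + 1)%:E *
    \int[mu]_(w in D) (Num.min `|u m w - Y w| 1)%:E) @ \oo --> 1%:E)%E.
  rewrite -[X in _ --> X]adde0 -(mule0 (K + 1)%:E).
  by apply: cvgeD => //; [exact: cvg_cst | exact: cvgeZl].
by apply: (cvge_ge _ lim1); exact: nearW.
Qed.

Lemma integral_cut_pos_le_cut_neg (K : R) (Y : T -> R) : 0 <= K ->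
  measurable_fun D Y ->
  (\int[mu]_(w in D) (clip K (Y w))%:E <= 1%:E)%E ->
  (\int[mu]_(w in D) (Num.min (Num.max (Y w) 0) K)%:E <=
   \int[mu]_(w in D) (Num.min (Num.max (- Y w) 0) 1)%:E)%E.
Proof.
move=> K0 mY.
set q := fun w => Num.min (Num.max (- Y w) 0) 1.
have mq : measurable_fun D q.
  apply: measurable_minr; last exact: measurable_cst.
  apply: measurable_maxr; last exact: measurable_cst.
  exact: measurableT_comp.
have q0 w : 0 <= q w by rewrite le_min le_max lexx orbT ler01.
have q1 w : 0 <= 1 - q w by rewrite subr_ge0 ge_min lexx orbT.
have m1q : measurable_fun D (fun w => 1 - q w).
  by apply: measurable_funB => //; exact: measurable_cst.
have one_split : (1%:E = \int[mu]_(w in D) (1 - q w)%:E +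
                         \int[mu]_(w in D) (q w)%:E)%E.
  rewrite -ge0_integralD //.
  - by rewrite -integral_cst1; apply: eq_integral => w _; rewrite -EFinD subrK.
  - by move=> w _; rewrite lee_fin.
  - exact/measurable_EFinP.
  - by move=> w _; rewrite lee_fin.
  - exact/measurable_EFinP.
have mp : measurable_fun D (fun w => Num.min (Num.max (Y w) 0) K).
  apply: measurable_minr; last exact: measurable_cst.
  by apply: measurable_maxr => //; exact: measurable_cst.
have p0 w : 0 <= Num.min (Num.max (Y w) 0) K by rewrite le_min le_max lexx orbT K0.
have fin1q : (\int[mu]_(w in D) (1 - q w)%:E)%E \is a fin_num.
  rewrite ge0_fin_numE; last by apply: integral_ge0 => w _; rewrite lee_fin.
  apply: (@le_lt_trans _ _ 1%:E); last exact: ltry.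
  by rewrite one_split leeDl //; apply: integral_ge0 => w _; rewrite lee_fin.
under eq_integral => w _ do rewrite (clip_split _ K0) EFinD.
rewrite ge0_integralD //.
- move=> hclip; rewrite -(leeD2rE _ _ fin1q) [leRHS]addeC -one_split.
  exact: hclip.
- by move=> w _; rewrite lee_fin.
- exact/measurable_EFinP.
- by move=> w _; rewrite lee_fin; exact: q1.
- exact/measurable_EFinP.
Qed.

Lemma ge0_integral_le_of_cut (f : T -> R) (c : \bar R) :
  measurable_fun D f -> (forall w, D w -> 0 <= f w) ->
  (forall n : nat, (\int[mu]_(w in D) (Num.min (f w) n%:R)%:E <= c)%E) ->
  (\int[mu]_(w in D) (f w)%:E <= c)%E.
Proof.
move=> mf f0 cut_le.
pose g n w := (Num.min (f w) n%:R)%:E.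
have mg n : measurable_fun D (g n).
  by apply/measurable_EFinP; apply: measurable_minr => //; exact: measurable_cst.
have g0 n w : D w -> (0 <= g n w)%E.
  by move=> Dw; rewrite lee_fin /g le_min (f0 _ Dw) ler0n.
have g_nd w : D w -> nondecreasing_seq (g^~ w).
  by move=> _ m n mn; rewrite lee_fin /g le_min ge_min lexx /= ge_min ler_nat mn orbT.
have := @cvg_monotone_convergence _ _ _ mu D mD g mg g0 g_nd.
have -> : (\int[mu]_(w in D) limn (g^~ w) = \int[mu]_(w in D) (f w)%:E)%E.
  apply: eq_integral => w Dw; apply: cvg_lim => //; apply: cvg_near_cst.
  exists (Num.truncn (f w)).+1 => // n /= fn; rewrite /g min_l //.
  by rewrite ltW // (lt_le_trans (truncnS_gt _)) // ler_nat.
by move=> lim_g; apply: cvge_le lim_g; exact: nearW.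
Qed.

Lemma integral_le0_of_clip (Y : T -> R) : measurable_fun D Y ->
  (forall K, 0 <= K -> (\int[mu]_(w in D) (clip K (Y w))%:E <= 1%:E)%E) ->
  (\int[mu]_(w in D) (Y w)%:E <= 0)%E.
Proof.
move=> mY clip_le1.
have mYn : measurable_fun D (fun w => - Y w) by exact: measurableT_comp.
rewrite integralE sube_le0 -/(EFin \o Y) funerpos funerneg.
apply: (@le_trans _ _ (\int[mu]_(w in D) (Num.min (Num.max (- Y w) 0) 1)%:E)%E).
  apply: ge0_integral_le_of_cut => [|w _|n].
  - by apply: measurable_maxr => //; exact: measurable_cst.
  - by rewrite le_max lexx orbT.
  - by apply: integral_cut_pos_le_cut_neg => //; exact: clip_le1.
apply: ge0_le_integral => //.
- by move=> w _; rewrite lee_fin le_min le_max lexx orbT ler01.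
- apply/measurable_EFinP; apply: measurable_minr; last exact: measurable_cst.
  by apply: measurable_maxr => //; exact: measurable_cst.
- by apply/measurable_EFinP; apply: measurable_maxr => //; exact: measurable_cst.
- by move=> w _; rewrite lee_fin ge_min lexx.
Qed.

Lemma integralZl_le0 (lam : R) (Y : T -> R) : 0 < lam -> measurable_fun D Y ->
  (\int[mu]_(w in D) (Y w)%:E <= 0)%E ->
  (\int[mu]_(w in D) (lam * Y w)%:E <= 0)%E.
Proof.
move=> lam0 mY; rewrite integralE sube_le0 => Yp_le_Yn.
have mYp : measurable_fun D (EFin \o Y)^\+%E by exact/measurable_funepos/measurable_EFinP.
have mYn : measurable_fun D (EFin \o Y)^\-%E by exact/measurable_funeneg/measurable_EFinP.
rewrite (_ : (fun w => (lam * Y w)%:E) = (fun w => lam%:E * (Y w)%:E)%E); last first.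
  by apply/funext => w; rewrite EFinM.
rewrite integralE ge0_funeposM ?ge0_funenegM ?(ltW lam0) // sube_le0.
by rewrite !ge0_integralZl_EFin ?(ltW lam0) // lee_wpmul2l // lee_fin ltW.
Qed.

Lemma integrable_of_integral_fin (f : T -> R) (r : R) : measurable_fun D f ->
  (\int[mu]_(w in D) (f w)%:E = r%:E)%E -> mu.-integrable D (EFin \o f).
Proof.
move=> mf fr; apply/integrableP; split; first exact/measurable_EFinP.
have : (\int[mu]_(w in D) (EFin \o f)^\+ w - \int[mu]_(w in D) (EFin \o f)^\- w)%E
    \is a fin_num by rewrite -integralE fr.
rewrite fin_numB => /andP[fin_pos fin_neg].
rewrite -/((abse \o (EFin \o f))) fune_abse ge0_integralD //.
- by rewrite ltey_eq fin_numD fin_pos fin_neg.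
- exact/measurable_funepos/measurable_EFinP.
- exact/measurable_funeneg/measurable_EFinP.
Qed.

End unit_mass.

Lemma sum_pos_le_sum_neg (R : realDomainType) (I : Type) (r : seq I) (c : I -> R) :
  \sum_(i <- r) c i <= 0 ->
  \sum_(i <- r | 0 < c i) c i <= \sum_(i <- r | c i < 0) `|c i|.
Proof.
move=> sum_le0; rewrite -subr_le0 big_mkcond [X in _ - X]big_mkcond -sumrB.
rewrite (eq_bigr c) // => i _.
by have [ci0|ci0|->] := ltgtP (c i) 0; rewrite ?subr0 ?sub0r ?ltr0_norm ?opprK.
Qed.

Lemma exists_pos_lb (R : realDomainType) (f : nat -> R) n :
  (forall k, (0 < k <= n)%N -> 0 < f k) ->
  exists2 d : R, 0 < d & forall k, (0 < k <= n)%N -> d <= f k.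
Proof.
elim: n => [_|n IHn f_gt0]; first by exists 1 => // -[].
have [d d0 d_le] : exists2 d : R, 0 < d & forall k, (0 < k <= n)%N -> d <= f k.
  by apply: IHn => k /andP[k0 kn]; apply: f_gt0; rewrite k0 (leqW kn).
exists (Num.min d (f n.+1)); first by rewrite lt_min d0 f_gt0 //= leqnn.
move=> k /andP[k0]; rewrite leq_eqVlt => /orP[/eqP ->|kn].
  by rewrite ge_min lexx orbT.
by rewrite ge_min d_le ?k0.
Qed.

Section unit_interval.
Variable R : realType.
Local Notation mu := (@lebesgue_measure R).
Local Notation D := (`[0%R, 1%R]%classic : set R).

Lemma lebesgue_measure_unit_interval : mu D = 1%E.
Proof. by rewrite lebesgue_measure_itv /= lte01 /= sube0. Qed.

Lemma not_ae_on_interval (P : R -> Prop) (a : R) : 0 < a ->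
  (forall w, 0 < w < a -> ~ P w) -> ~ {ae mu, forall w, P w}.
Proof.
move=> a0 notP [N [mN N0 PN]].
have itv_N : `]0, a[%classic `<=` N.
  by move=> w; rewrite /= in_itv /= => /notP; exact: PN.
have : (mu `]0%R, a[ <= 0)%E.
  apply: le_trans (le_measure mu (mem_set (measurable_itv _)) (mem_set mN) itv_N) _.
  by move/eqP: N0; rewrite eq_le => /andP[].
by rewrite lebesgue_measure_itv /= lte_fin a0 /= sube0 lee_fin leNgt a0.
Qed.

Lemma measurable_invr : measurable_fun [set: R] (@GRing.inv R).
Proof.
rewrite -(setUv [set (0 : R)]).
apply/measurable_funU => //; first exact: measurableC.
split; first exact: measurable_fun_set1.
apply: open_continuous_measurable_fun.
  by rewrite openC; apply: accessible_closed_set1; apply: hausdorff_accessible.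
by move=> x /set_mem /eqP x0; apply: inv_continuous.
Qed.

Lemma measurable_Sn (eps : nat -> R) k : measurable_fun [set: R] (Sn eps k).
Proof.
apply: measurable_fun_ifT; first exact: measurable_fun_ltr.
  apply: measurableT_comp; first exact: oppr_measurable.
  apply: measurableT_comp; first exact: measurable_invr.
  by apply: continuous_measurable_fun; exact: sqrt_continuous.
apply: measurableT_comp; first exact: measurable_invr.
exact: measurableT_comp (measurable_powR _) (measurable_funB _ _).
Qed.

Lemma integral_portfolio (eps : nat -> R) n (c : nat -> R) :
  (forall k, (0 < k <= n)%N -> (\int[mu]_(w in D) (Sn eps k w)%:E = 1%:E)%E) ->
  mu.-integrable D (EFin \o portfolio eps n c) /\
  (\int[mu]_(w in D) (portfolio eps n c w)%:E = (\sum_(1 <= k < n.+1) c k)%:E)%E.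
Proof.
elim: n => [_|n IHn ES1].
  have -> : portfolio eps 0 c = cst 0 by apply/funext => w; rewrite /portfolio big_geq.
  by split; [exact: integrable0 | rewrite big_geq // integral0].
have [int_n Int_n] : mu.-integrable D (EFin \o portfolio eps n c) /\
    (\int[mu]_(w in D) (portfolio eps n c w)%:E = (\sum_(1 <= k < n.+1) c k)%:E)%E.
  by apply: IHn => k /andP[k0 kn]; apply: ES1; rewrite k0 (leqW kn).
have Sn1 : (\int[mu]_(w in D) (Sn eps n.+1 w)%:E = 1%:E)%E by apply: ES1; rewrite /= leqnn.
have int_Sn : mu.-integrable D (EFin \o Sn eps n.+1).
  apply: integrable_of_integral_fin Sn1 => //.
  exact: measurable_funS (measurable_Sn _ _).
have int_cSn : mu.-integrable D (fun w => (c n.+1)%:E * (Sn eps n.+1 w)%:E)%E.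
  exact: integrableZl.
have portfolioS w :
    portfolio eps n.+1 c w = portfolio eps n c w + c n.+1 * Sn eps n.+1 w.
  by rewrite /portfolio big_nat_recr.
split.
  rewrite (_ : EFin \o _ = (EFin \o portfolio eps n c) \+
                          (fun w => (c n.+1)%:E * (Sn eps n.+1 w)%:E))%E.
    exact: integrableD.
  by apply/funext => w; rewrite /= portfolioS EFinD EFinM.
under eq_integral do rewrite portfolioS EFinD EFinM.
by rewrite integralD // integralZl // Int_n Sn1 mule1 -EFinD [in RHS]big_nat_recr.
Qed.

Lemma portfolio_near0 (eps : nat -> R) n (c : nat -> R) w :
  (forall k, (0 < k <= n)%N -> w < eps k) ->
  portfolio eps n c w = - (\sum_(1 <= k < n.+1) c k) / Num.sqrt w.
Proof.
move=> w_lt_eps; rewrite mulNr -mulrN mulr_suml.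
by apply: eq_big_nat => k k_in; rewrite /Sn ifT // w_lt_eps.
Qed.

Lemma sum_le0_of_ae_ge (eps : nat -> R) n (c : nat -> R) :
  (forall k, (0 < k <= n)%N -> 0 < eps k) ->
  {ae mu, forall w, D w -> -1 <= portfolio eps n c w} ->
  \sum_(1 <= k < n.+1) c k <= 0.
Proof.
move=> eps_gt0 port_ge; rewrite leNgt; apply/negP => s_gt0.
set s := \sum_(1 <= k < n.+1) c k in s_gt0.
have [e e0 e_le] := exists_pos_lb eps_gt0.
pose a := Num.min e (Num.min (s ^+ 2) 1).
have a0 : 0 < a by rewrite !lt_min e0 exprn_gt0 // ltr01.
apply: (not_ae_on_interval a0 _ port_ge) => w /andP[w0 wa].
have Dw : D w.
  by rewrite /= in_itv /= (ltW w0) (ltW (lt_le_trans wa _)) // !ge_min lexx !orbT.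
move=> /(_ Dw); apply/negP; rewrite -ltNge.
have sqrtw0 : 0 < Num.sqrt w by rewrite sqrtr_gt0.
have sqrtw_s : Num.sqrt w < s.
  rewrite -(ger0_norm (ltW s_gt0)) -sqrtr_sqr ltr_sqrt ?exprn_gt0 //.
  by rewrite (lt_le_trans wa) // !ge_min lexx !orbT.
rewrite portfolio_near0; last first.
  by move=> k k_in; rewrite (lt_le_trans wa) // (le_trans _ (e_le _ k_in)) // ge_min lexx.
by rewrite mulNr ltrN2 ltr_pdivlMr // mul1r.
Qed.

Lemma Xn1_integral_le0 (eps : nat -> R) n (f : R -> R) :
  (forall k, (0 < k)%N -> 0 < eps k) ->
  (forall k, (0 < k)%N -> (\int[mu]_(w in D) (Sn eps k w)%:E = 1%:E)%E) ->
  Xn1 eps n f ->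
  [/\ mu.-integrable D (EFin \o f), (\int[mu]_(w in D) (f w)%:E <= 0)%E
     & {ae mu, forall w, D w -> -1 <= f w}].
Proof.
move=> eps_gt0 ES1 [c [-> port_ge]].
have [int_port ->] : mu.-integrable D (EFin \o portfolio eps n c) /\
    (\int[mu]_(w in D) (portfolio eps n c w)%:E = (\sum_(1 <= k < n.+1) c k)%:E)%E.
  by apply: integral_portfolio => k /andP[k0 _]; exact: ES1.
split=> //; rewrite lee_fin.
by apply: sum_le0_of_ae_ge port_ge => k /andP[k0 _]; exact: eps_gt0.
Qed.

End unit_interval.

Theorem lemma6p2 (R : realType) (eps : nat -> R)
  (heps01 : forall n, (0 < n)%N -> 0 < eps n < 1)
  (heps0 : eps @ \oo --> 0)
  (hE : forall n, (0 < n)%N ->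
     (\int[@lebesgue_measure R]_(w in `[0%R, 1%R]) (Sn eps n w)%:E = 1%:E)%E) :
  (forall (n : nat) (c : nat -> R),
     {ae (@lebesgue_measure R), forall w, `[0, 1]%classic w -> -1 <= portfolio eps n c w} ->
     \sum_(1 <= k < n.+1 | 0 < c k) c k <= \sum_(1 <= k < n.+1 | c k < 0) `|c k|)
  /\
  (forall X, calX eps X ->
     (\int[@lebesgue_measure R]_(w in `[0%R, 1%R]) (X w)%:E <= 0)%E).
Proof.
have eps_gt0 k : (0 < k)%N -> 0 < eps k by move=> /heps01 /andP[].
split=> [n c port_ge | X [lam lam0 [Y [mY [u [u_Xn1 dist0]]]] ->]].
  apply: sum_pos_le_sum_neg; apply: sum_le0_of_ae_ge port_ge => k /andP[k0 _].
  exact: eps_gt0.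
have muD := lebesgue_measure_unit_interval R.
apply: integralZl_le0 => //; apply: integral_le0_of_clip => // K K0.
apply: integral_clip_le1_of_approx dist0 => //.
all: by move=> m; have [n _ /(Xn1_integral_le0 eps_gt0 hE)[]] := u_Xn1 m.
Qed.
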